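(* There exists a sequence of functions $f_1, f_2, \ldots : \mathbb{R}^2 \to \{-1,1\}$ such that: (a) For every fixed depth $d \geq 1$ there is a constant $b > 1$ (depending only on $d$) such that for every $m$, every ReLU MLP classifier with input in $\mathbb{R}^2$, $d$ hidden layers and all hidden layers of width $w$ that computes $f_m$ exactly (i.e. outputs $f_m(x)$ for every $x \in \mathbb{R}^2$) satisfies $w \geq b^m$. (b) For every $m$ there is a ReLU MLP classifier with a number of parameters linear in $m$ that computes $f_m$ exactly; concretely, one with depth $m+2$ and every hidden layer of width at most $4$.
   Context: Let $\sigma(t) = \max\{0,t\}$ act elementwise. A ReLU MLP classifier with input in $\mathbb{R}^2$, $d$ hidden layers and hidden widths $w_1,\dots,w_d$ is a map $F:\mathbb{R}^2 \to \{-1,1\}$ of the form $h_0 = x$, $h_i = \sigma(A_i h_{i-1} + c_i)$ for $i=1,\dots,d$ (with $A_i \in \mathbb{R}^{w_i \times w_{i-1}}$, $w_0 = 2$, $c_i \in \mathbb{R}^{w_i}$), and $F(x) = 1$ if $v^\top h_d + v_0 > 0$ and $F(x) = -1$ otherwise, for some $v \in \mathbb{R}^{w_d}$, $v_0 \in \mathbb{R}$. Its depth is the number of hidden layers $d$; layers of smaller width are regarded as width-$w$ layers with some zero parameters. *)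

From HB Require Import structures.
From mathcomp Require Import all_boot all_order all_algebra.
From mathcomp Require Import Rstruct.
From Stdlib Require Import Reals.
Set Implicit Arguments. Unset Strict Implicit. Unset Printing Implicit Defensive.
Import Order.TTheory GRing.Theory Num.Theory.
Local Open Scope ring_scope.

Notation R := Rdefinitions.R.

(* Parameters of a ReLU MLP classifier R^2 -> {-1,1} all of whose hidden
   layers have width w (smaller layers are padded with zero parameters).
   W0,b0 : first hidden layer (A_1, c_1);
   Wh i, bh i : hidden layer i+2 (A_{i+2}, c_{i+2}), only i < d-1 are used;
   vout, v0 : output affine form. *)
Record mlp (w : nat) := MLP {
  W0 : 'M[R]_(w, 2);
  b0 : 'cV[R]_w;
  Wh : nat -> 'M[R]_w;
  bh : nat -> 'cV[R]_w;
  vout : 'cV[R]_w;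
  v0 : R }.

Definition relu_v (n : nat) (u : 'cV[R]_n) : 'cV[R]_n :=
  map_mx (fun t => Num.max 0 t) u.

Definition mlp_hidden (w d : nat) (N : mlp w) (x : 'cV[R]_2) : 'cV[R]_w :=
  foldl (fun h i => relu_v (Wh N i *m h + bh N i))
        (relu_v (W0 N *m x + b0 N)) (iota 0 d.-1).

Definition mlp_eval (w d : nat) (N : mlp w) (x : 'cV[R]_2) : int :=
  if 0 < ((vout N)^T *m mlp_hidden d N x) 0 0 + v0 N then 1 else -1.

From HB Require Import structures.
From mathcomp Require Import all_boot all_order all_algebra.
From mathcomp Require Import Rstruct.
From mathcomp Require Import ring lra zify.
Import Order.TTheory GRing.Theory Num.Theory.
Local Open Scope ring_scope.
Set Implicit Arguments. Unset Strict Implicit. Unset Printing Implicit Defensive.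

(* The hard functions are f_m := the output of saw_net at depth m + 2, where every
   hidden layer of saw_net applies the two-tooth sawtooth saw = tent o tent; on the
   points j / 4^(m+2) of the first axis, f_m computes the parity of j, so along this
   line it changes sign 4^(m+2) times.
   Restricted to a line, each unit of a ReLU network is piecewise affine in the
   sample index j.  A layer of width w multiplies the number of affine pieces by at
   most w + 1, as each of its units adds at most one kink per piece of its input,
   and the output changes sign at most once per piece.  Hence a depth-d, width-w
   network computing f_m has 4^(m+2) < 2 (w + 1)^d, which gives w >= b^m for any
   b > 1 with b^d <= 2 once w >= 2; width 1 is impossible since such a network is
   monotone along every line. *)

Lemma card_bigcup_leq (T : finType) n (B : 'I_n -> {set T}) :
  (#|\bigcup_(i < n) B i| <= \sum_(i < n) #|B i|)%N.
Proof.
elim: n B => [|n IH] B; first by rewrite !big_ord0 cards0.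
rewrite !big_ord_recr /= cardsU.
by apply: leq_trans (leq_subr _ _) _; rewrite leq_add2r; apply: IH.
Qed.

Lemma bernoulli_le (x : R) n : -1 <= x -> 1 + n%:R * x <= (1 + x) ^+ n.
Proof.
move=> x1; elim: n => [|n IH]; first by rewrite mul0r addr0 expr0.
have n0 : 0 <= n%:R :> R by rewrite ler0n.
have x0 : 0 <= 1 + x by lra.
rewrite exprS -natr1; apply: le_trans (ler_wpM2l x0 IH); nra.
Qed.

Definition sign_change (g : nat -> R) (i : nat) : bool := (0 < g i.-1) != (0 < g i).

Lemma arith_sign_stable (a b t : R) : (0 < a) != (0 < b) -> 1 <= t ->
  (0 < a + t * (b - a)) = (0 < a + (t + 1) * (b - a)).
Proof.
by case: (ltrP 0 a); case: (ltrP 0 b); case: (ltrP 0 (a + t * (b - a)));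
  case: (ltrP 0 (a + (t + 1) * (b - a))) => //= *; nra.
Qed.

Section Kinks.

Variable K : nat.

(* [P i] marks the segment [i-1, i] of the samples 0..K as possibly containing a
   kink of [g]: three consecutive samples are collinear unless one of the two
   segments between them is marked. *)
Definition kinks_in (P : pred nat) (g : nat -> R) :=
  forall j, (j + 2 <= K)%N -> ~~ P j.+1 -> ~~ P j.+2 -> g j + g j.+2 = 2 * g j.+1.

Definition nkinks (P : pred nat) := #|[set i : 'I_K.+1 | P i]|.

Lemma nkinks_pred0 : nkinks pred0 = 0%N.
Proof. by apply/eqP; rewrite cards_eq0; apply/eqP/setP => i; rewrite !inE. Qed.

Lemma kinks_in_affine (a c : R) : kinks_in pred0 (fun j => a + j%:R * c).
Proof. by move=> j *; rewrite -[j.+2%:R]natr1 -[j.+1%:R]natr1; ring. Qed.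

Lemma eq_kinks_in P (f g : nat -> R) : f =1 g -> kinks_in P f -> kinks_in P g.
Proof. by move=> fg fP j *; rewrite -!fg; apply: fP. Qed.

Lemma sub_kinks_in (P Q : pred nat) g : subpred P Q -> kinks_in P g -> kinks_in Q g.
Proof. by move=> PQ gP j jK /negP Q1 /negP Q2; apply: gP => //; apply/negP => /PQ. Qed.

Lemma kinks_in_arith P g p q : kinks_in P g -> (q <= K)%N ->
    (forall k, (p < k <= q)%N -> ~~ P k) ->
  forall k, (p + k <= q)%N -> g (p + k)%N = g p + k%:R * (g p.+1 - g p).
Proof.
move=> gP qK noP.
suff two k : (p + k.+1 <= q)%N -> g (p + k)%N = g p + k%:R * (g p.+1 - g p) /\
    g (p + k.+1)%N = g p + k.+1%:R * (g p.+1 - g p).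
  by case=> [_|k /two[]//]; rewrite addn0 mul0r addr0.
elim: k => [|k IH] lt_q; first by rewrite addn0 addn1 mul0r mul1r addr0 addrC subrK.
have [gk gk1] := IH ltac:(lia); split=> //.
have e := gP (p + k)%N ltac:(lia) (noP (p + k).+1 ltac:(lia)) (noP (p + k).+2 ltac:(lia)).
rewrite -!addnS in e.
have -> : g (p + k.+2)%N = 2 * g (p + k.+1)%N - g (p + k)%N by rewrite -e; ring.
by rewrite gk1 gk -[k.+2%:R]natr1 -[k.+1%:R]natr1; ring.
Qed.

Lemma kink_between P g i i' : kinks_in P g -> (0 < i)%N -> (i < i' <= K)%N ->
  ~~ P i -> sign_change g i -> sign_change g i' -> exists2 k, (i < k <= i')%N & P k.
Proof.
move=> gP i0 /andP[lt_ii' i'K] Pi si si'.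
have [/hasP[k] | /hasPn noP] := boolP (has P (index_iota i.+1 i'.+1)).
  by rewrite mem_index_iota => ik Pk; exists k.
have noP' k : (i.-1 < k <= i')%N -> ~~ P k.
  by case: (ltngtP k i) => [|ik|->] // *; [lia | apply: noP; rewrite mem_index_iota; lia].
have ga := kinks_in_arith gP i'K noP'.
have t1 : 1 <= (i' - i)%:R :> R by rewrite ler1n; lia.
have si2 : (0 < g i.-1) != (0 < g i.-1.+1) by rewrite prednK.
exfalso; move: si'; have -> : i' = (i.-1 + (i' - i).+1)%N by lia.
rewrite /sign_change (ga (i' - i).+1); last by lia.
rewrite addnS /= ga; last by lia.
by rewrite -natr1 (arith_sign_stable si2) ?eqxx.
Qed.

Lemma card_sign_changes P g : kinks_in P g ->
  (#|[set i : 'I_K.+1 | ~~ P i && sign_change g i]| <= (nkinks P).+1)%N.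
Proof.
move=> gP; set A := [set i : 'I_K.+1 | _].
pose below (i : 'I_K.+1) := #|[set c : 'I_K.+1 | P c && (c <= i)%N]|.
have below_mono (i i' : 'I_K.+1) :
    i \in A -> i' \in A -> (i < i')%N -> (below i < below i')%N.
  rewrite !inE => /andP[Pi si] /andP[_ si'] lt_ii'.
  have i0 : (0 < i)%N.
    by rewrite lt0n; apply: contraTneq si => e; rewrite /sign_change e eqxx.
  have i'K : (i' <= K)%N by rewrite -ltnS.
  have [k /andP[ik ki'] Pk] := kink_between gP i0 (introT andP (conj lt_ii' i'K)) Pi si si'.
  apply: proper_card; apply/properP; split.
    by apply/subsetP => c; rewrite !inE => /andP[-> ci]; lia.
  have kK : (k < K.+1)%N by lia.
  by exists (Ordinal kK); rewrite !inE /= Pk //= -ltnNge.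
have below_inj : {in A &, injective below}.
  move=> i i' iA i'A e; apply/val_inj.
  case: (ltngtP i i') => // [/(below_mono _ _ iA i'A) | /(below_mono _ _ i'A iA)];
    by rewrite e ltnn.
rewrite cardE -(size_map below) -[(nkinks P).+1](size_iota 0).
apply: uniq_leq_size.
  by rewrite map_inj_in_uniq ?enum_uniq // => i i'; rewrite !mem_enum; apply: below_inj.
move=> _ /mapP[i _ ->]; rewrite mem_iota ltnS /=.
by apply: subset_leq_card; apply/subsetP => c; rewrite !inE => /andP[].
Qed.

Lemma kinks_in_relu P g : kinks_in P g ->
  kinks_in (fun i => P i || sign_change g i) (fun j => Num.max 0 (g j)).
Proof.
move=> gP j jK; rewrite !negb_or /sign_change !negbK => /andP[P1 /eqP s1] /andP[P2 /eqP s2].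
have e := gP j jK P1 P2.
have [pos1|npos1] := ltrP 0 (g j.+1).
  have pos0 : 0 < g j by rewrite s1.
  have pos2 : 0 < g j.+2 by rewrite -s2.
  by rewrite !max_r ?ltW.
have npos0 : g j <= 0 by rewrite leNgt s1 -leNgt.
have npos2 : g j.+2 <= 0 by rewrite leNgt -s2 -leNgt.
by rewrite !max_l // mulr0 addr0.
Qed.

Lemma kinks_in_lin n w (A : 'M[R]_(w, n)) (H : nat -> 'cV[R]_n) P (c : R) r :
  (forall k, kinks_in P (fun j => H j k 0)) -> kinks_in P (fun j => (A *m H j) r 0 + c).
Proof.
move=> HP j jK P1 P2; rewrite !mxE.
suff : \sum_k A r k * H j k 0 + \sum_k A r k * H j.+2 k 0 =
       2 * \sum_k A r k * H j.+1 k 0 by lra.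
rewrite -big_split mulr_sumr; apply: eq_bigr => k _.
by rewrite mulrCA -(HP k j jK P1 P2) mulrDr.
Qed.

Lemma kinks_in_layer n w (A : 'M[R]_(w, n)) (b : 'cV[R]_w) (H : nat -> 'cV[R]_n) P :
    (forall k, kinks_in P (fun j => H j k 0)) ->
  exists Q : pred nat, (forall r, kinks_in Q (fun j => relu_v (A *m H j + b) r 0)) /\
    ((nkinks Q).+1 <= w.+1 * (nkinks P).+1)%N.
Proof.
move=> HP.
pose g r j := (A *m H j) r 0 + b r 0.
exists (fun i => P i || [exists r, sign_change (g r) i]); split.
  move=> r; apply: (@eq_kinks_in _ (fun j => Num.max 0 (g r j))).
    by move=> j; rewrite /relu_v /g !mxE.
  apply: (@sub_kinks_in (fun i => P i || sign_change (g r) i)); last first.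
    exact: kinks_in_relu (kinks_in_lin A (b r 0) r HP).
  move=> i /orP[-> // | s].
  by apply/orP; right; apply/existsP; exists r.
pose fresh r := [set i : 'I_K.+1 | ~~ P i && sign_change (g r) i].
have sub : [set i : 'I_K.+1 | P i || [exists r, sign_change (g r) i]] \subset
           [set i : 'I_K.+1 | P i] :|: \bigcup_(r < w) fresh r.
  apply/subsetP => i; rewrite !inE; case Pi: (P i) => //= /existsP[r sr].
  by apply/bigcupP; exists r => //; rewrite inE Pi sr.
have card_fresh : (\sum_(r < w) #|fresh r| <= w * (nkinks P).+1)%N.
  rewrite -[w in (_ <= w * _)%N]card_ord -sum_nat_const.
  by apply: leq_sum => r _; apply/card_sign_changes/kinks_in_lin.
move: (subset_leq_card sub); rewrite cardsU /nkinks => le_Q.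
have := card_bigcup_leq fresh; rewrite /nkinks in card_fresh *; lia.
Qed.

End Kinks.

Definition net_out w d (N : mlp w) (x : 'cV[R]_2) : R :=
  ((vout N)^T *m mlp_hidden d N x) 0 0 + v0 N.

Lemma mlp_eval_eq1 w d (N : mlp w) x : (mlp_eval d N x == 1) = (0 < net_out d N x).
Proof. by rewrite /mlp_eval /net_out; case: ifP. Qed.

Lemma mlp_hidden1 w (N : mlp w) x : mlp_hidden 1 N x = relu_v (W0 N *m x + b0 N).
Proof. by []. Qed.

Lemma mlp_hiddenS w (N : mlp w) k x :
  mlp_hidden k.+2 N x = relu_v (Wh N k *m mlp_hidden k.+1 N x + bh N k).
Proof.
have iotaSr : iota 0 k.+1 = iota 0 k ++ [:: k] by rewrite -addn1 iotaD.
by rewrite /mlp_hidden -[k.+2.-1]/k.+1 iotaSr foldl_cat.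
Qed.

Lemma mlp_hidden_kinks K w (N : mlp w) (x0 v : 'cV[R]_2) k : exists P : pred nat,
  (forall r, kinks_in K P (fun j => mlp_hidden k.+1 N (x0 + j%:R *: v) r 0)) /\
  ((nkinks K P).+1 <= w.+1 ^ k.+1)%N.
Proof.
elim: k => [|k [P [HP cardP]]].
  have line r : kinks_in K pred0 (fun j => (x0 + j%:R *: v) r 0).
    by apply: (eq_kinks_in _ (kinks_in_affine (x0 r 0) (v r 0))) => j; rewrite !mxE.
  have [Q [HQ cardQ]] := kinks_in_layer (W0 N) (b0 N) line.
  by exists Q; split => //; rewrite nkinks_pred0 muln1 in cardQ; rewrite expn1.
have [Q [HQ cardQ]] := kinks_in_layer (Wh N k) (bh N k) HP.
exists Q; split; first by move=> r; apply: (eq_kinks_in _ (HQ r)) => j; rewrite mlp_hiddenS.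
by rewrite expnS; apply: leq_trans cardQ _; rewrite leq_mul2l cardP orbT.
Qed.

Lemma alternation_length_bound K d w (N : mlp w) (x0 v : 'cV[R]_2) : (0 < d)%N ->
    (forall j, (j <= K)%N -> (0 < net_out d N (x0 + j%:R *: v)) = odd j) ->
  (K < 2 * w.+1 ^ d)%N.
Proof.
move=> d0 alt; pose g j := net_out d N (x0 + j%:R *: v).
have [P [HP cardP]] := mlp_hidden_kinks K N x0 v d.-1.
rewrite prednK // in cardP.
have gP : kinks_in K P g by apply: kinks_in_lin.
have flips := card_sign_changes gP.
have sub : [set~ (ord0 : 'I_K.+1)] \subset
    [set i : 'I_K.+1 | P i] :|: [set i : 'I_K.+1 | ~~ P i && sign_change g i].
  apply/subsetP => i; rewrite !inE; case: (P i) => //= i0.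
  have ip : (0 < i)%N by rewrite lt0n; apply: contra i0 => /eqP e; apply/eqP/val_inj.
  have iK : (i <= K)%N by rewrite -ltnS.
  have oddi : odd i = ~~ odd i.-1 by rewrite -{1}(prednK ip).
  by rewrite /sign_change /g !alt ?oddi ?(leq_trans (leq_pred i)) //; case: odd.
have := subset_leq_card sub; rewrite cardsC1 card_ord cardsU /nkinks in cardP flips *.
lia.
Qed.

Definition monotone_seq (g : nat -> R) :=
  (forall j, g j <= g j.+1) \/ (forall j, g j.+1 <= g j).

Lemma eq_monotone_seq (f g : nat -> R) : f =1 g -> monotone_seq f -> monotone_seq g.
Proof. by move=> fg [fm|fm]; [left|right] => j; rewrite -!fg. Qed.

Lemma monotone_seq_affine (a c : R) : monotone_seq (fun j => a + j%:R * c).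
Proof.
by case: (lerP 0 c) => c0; [left|right] => j; rewrite -natr1 mulrDl mul1r; lra.
Qed.

Lemma monotone_seq_lin (a c : R) g : monotone_seq g -> monotone_seq (fun j => a * g j + c).
Proof.
by case=> gm; case: (lerP 0 a) => a0; [left|right|right|left] => j; have := gm j; nra.
Qed.

Lemma monotone_seq_relu g : monotone_seq g -> monotone_seq (fun j => Num.max 0 (g j)).
Proof. by case=> gm; [left|right] => j; apply: le_max2. Qed.

Lemma mlp_hidden_width1_monotone (N : mlp 1) (x0 v : 'cV[R]_2) k :
  monotone_seq (fun j => mlp_hidden k.+1 N (x0 + j%:R *: v) 0 0).
Proof.
elim: k => [|k IH].
  pose a := (W0 N *m x0) 0 0 + b0 N 0 0; pose c := (W0 N *m v) 0 0.
  apply: (@eq_monotone_seq (fun j => Num.max 0 (a + j%:R * c))).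
    move=> j; rewrite mlp_hidden1 /relu_v mulmxDr -scalemxAr /a /c !mxE.
    by congr (Num.max 0 _); ring.
  exact/monotone_seq_relu/monotone_seq_affine.
apply: (@eq_monotone_seq
  (fun j => Num.max 0 (Wh N k 0 0 * mlp_hidden k.+1 N (x0 + j%:R *: v) 0 0 + bh N k 0 0))).
  by move=> j; rewrite mlp_hiddenS /relu_v !mxE big_ord1.
exact/monotone_seq_relu/monotone_seq_lin.
Qed.

Lemma width1_no_alternation d (N : mlp 1) (x0 v : 'cV[R]_2) :
  ~ (forall j, (j <= 2)%N -> (0 < net_out d N (x0 + j%:R *: v)) = odd j).
Proof.
move=> alt; pose g j := net_out d N (x0 + j%:R *: v).
have gm : monotone_seq g.
  apply: (@eq_monotone_seq
    (fun j => vout N 0 0 * mlp_hidden d.-1.+1 N (x0 + j%:R *: v) 0 0 + v0 N)).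
    by move=> j; rewrite /g /net_out !mxE big_ord1 mxE.
  exact/monotone_seq_lin/mlp_hidden_width1_monotone.
have g0 : g 0%N <= 0 by rewrite leNgt alt.
have g1 : 0 < g 1%N by rewrite alt.
have g2 : g 2%N <= 0 by rewrite leNgt alt.
by case: gm => gm; [have := gm 1%N | have := gm 0%N]; lra.
Qed.

Lemma alternation_width_ge2 d w (N : mlp w) (x0 v : 'cV[R]_2) : (0 < d)%N ->
    (forall j, (j <= 2)%N -> (0 < net_out d N (x0 + j%:R *: v)) = odd j) ->
  (2 <= w)%N.
Proof.
case: w N => [|[|w]] N d0 alt //.
  by have := alternation_length_bound d0 alt; rewrite exp1n.
by case: (width1_no_alternation alt).
Qed.

Definition width_base (d : nat) : R := (1 - (d.*2)%:R^-1)^-1.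

Lemma width_base_gt1 d : (0 < d)%N -> 1 < width_base d.
Proof.
move=> d0; have u0 : 0 < (d.*2)%:R^-1 :> R by rewrite invr_gt0 ltr0n double_gt0.
have u1 : (d.*2)%:R^-1 <= 2^-1 :> R.
  by rewrite lef_pV2 ?posrE ?ltr0n ?double_gt0 // ler_nat -muln2 leq_pmull.
by rewrite invf_gt1; lra.
Qed.

Lemma width_base_expr d : (0 < d)%N -> width_base d ^+ d <= 2.
Proof.
move=> d0; set u := (d.*2)%:R^-1 : R.
have du : d%:R * u = 2^-1.
  by rewrite /u -muln2 natrM invfM mulrA divff ?mul1r // pnatr_eq0 -lt0n.
have u0 : 0 < u by rewrite invr_gt0 ltr0n double_gt0.
have half_le : 2^-1 <= (1 - u) ^+ d.
  have d1 : 1 <= d%:R :> R by rewrite ler1n.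
  have u_le1 : -1 <= - u by nra.
  by have := bernoulli_le d u_le1; rewrite mulrN du; apply: le_trans; lra.
have pos : 0 < (1 - u) ^+ d by apply: lt_le_trans half_le; rewrite invr_gt0.
by rewrite /width_base -/u exprVn -[X in _ <= X]invrK lef_pV2 ?posrE ?invr_gt0.
Qed.

Lemma width_lower_bound d m w : (0 < d)%N -> (2 <= w)%N ->
  (4 ^ (m + 2) < 2 * w.+1 ^ d)%N -> width_base d ^+ m <= w%:R.
Proof.
move=> d0 w2 K_lt.
have sq_w : (w.+1 ^ d <= (w ^ d) ^ 2)%N by rewrite expnAC leq_exp2r //; nia.
have pow_lt : (2 ^ m < w ^ d)%N.
  have e : (4 ^ (m + 2) = (2 ^ m) ^ 2 * 16)%N by rewrite expnD expnAC.
  by rewrite -ltn_sqr; move: K_lt; rewrite e; lia.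
have b0 : 0 <= width_base d by apply/ltW/(lt_trans ltr01)/width_base_gt1.
have : (width_base d ^+ m) ^+ d < w%:R ^+ d.
  rewrite -exprM mulnC exprM; apply: (@le_lt_trans _ _ (2 ^+ m)).
    by apply: lerXn2r; rewrite ?nnegrE ?exprn_ge0 ?width_base_expr.
  by rewrite -!natrX ltr_nat.
by rewrite ltr_pXn2r ?nnegrE ?exprn_ge0 ?ler0n // => /ltW.
Qed.

Definition tent (t : R) : R := 2 * Num.min t (1 - t).

Lemma odd_minn_double_sub n j : (j <= n.*2)%N -> odd (minn j (n.*2 - j)) = odd j.
Proof. by move=> jn; rewrite /minn; case: ifP => // _; rewrite oddB // odd_double. Qed.

Lemma tent_dyadic q j : (0 < q)%N -> (j <= q.*2)%N ->
  tent (j%:R / (q.*2)%:R) = (minn j (q.*2 - j))%:R / q%:R.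
Proof.
move=> q0 jq; have qR : 0 < q%:R :> R by rewrite ltr0n.
have q2E : (q.*2)%:R = 2 * q%:R :> R by rewrite -mul2n natrM.
set t := j%:R / _.
have tq : t * (2 * q%:R) = j%:R by rewrite /t q2E mulfVK // mulf_neq0 ?gt_eqF.
have jR : j%:R <= 2 * q%:R :> R by rewrite -q2E ler_nat.
rewrite /tent; have [le_jq | lt_qj] := leqP j q.
  have jqR : j%:R <= q%:R :> R by rewrite ler_nat.
  have -> : minn j (q.*2 - j) = j by lia.
  by rewrite min_l; [rewrite -tq; field; rewrite gt_eqF | nra].
have qjR : q%:R < j%:R :> R by rewrite ltr_nat.
have -> : minn j (q.*2 - j) = (q.*2 - j)%N by lia.
by rewrite min_r; [rewrite natrB // q2E -tq; field; rewrite gt_eqF | nra].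
Qed.

Definition saw_shift : 'cV[R]_4 := \col_(i < 4) - ((i : nat)%:R / 4).
Definition saw_weights : 'cV[R]_4 := \col_(i < 4) [:: 4; -8; 8; -8]`_i.
Definition saw_features (t : R) : 'cV[R]_4 := relu_v (const_mx t + saw_shift).
(* [saw] interpolates (0,0), (1/4,1), (1/2,0), (3/4,1), (1,0). *)
Definition saw (t : R) : R := (saw_weights^T *m saw_features t) 0 0.

Definition saw_net : mlp 4 :=
  MLP (\matrix_(i, j) (j == 0 :> nat)%:R) saw_shift
      (fun _ => \matrix_(i, j) saw_weights j 0) (fun _ => saw_shift)
      saw_weights (- 2^-1).

Lemma sawE t : saw t = 4 * Num.max 0 t - 8 * Num.max 0 (t - 1 / 4)
  + 8 * Num.max 0 (t - 2 / 4) - 8 * Num.max 0 (t - 3 / 4).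
Proof.
rewrite /saw /saw_features /relu_v !mxE !big_ord_recr big_ord0 /= !mxE /=.
by rewrite mul0r subr0 add0r; lra.
Qed.

Lemma saw_tent t : 0 <= t <= 1 -> saw t = tent (tent t).
Proof.
rewrite sawE /tent => /andP[t0 t1].
case: (lerP t (1 - t)) => h1;
  [case: (lerP (2 * t) (1 - 2 * t)) | case: (lerP (2 * (1 - t)) (1 - 2 * (1 - t)))] => h2;
  case: (ler0P t); case: (ler0P (t - 1 / 4)); case: (ler0P (t - 2 / 4));
  case: (ler0P (t - 3 / 4)) => *; lra.
Qed.

Lemma saw_dyadic q j : (0 < q)%N -> (j <= 4 * q)%N ->
  exists j', [/\ (j' <= q)%N, odd j' = odd j & saw (j%:R / (4 * q)%:R) = j'%:R / q%:R].
Proof.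
move=> q0 jq; have q4E : (4 * q)%N = (q.*2).*2 by rewrite -!mul2n mulnA.
have jq' : (j <= (q.*2).*2)%N by rewrite -q4E.
set j1 := minn j ((q.*2).*2 - j); set j2 := minn j1 (q.*2 - j1).
have j1q : (j1 <= q.*2)%N by rewrite /j1 -!muln2; lia.
exists j2; split.
- by rewrite /j2 -!muln2; lia.
- by rewrite odd_minn_double_sub // /j1 odd_minn_double_sub.
- rewrite saw_tent; first by rewrite q4E tent_dyadic ?double_gt0 // -/j1 tent_dyadic.
  by rewrite divr_ge0 ?ler0n //= ler_pdivrMr ?ltr0n ?muln_gt0 // mul1r ler_nat.
Qed.

Lemma iter_saw_dyadic n j : (j <= 4 ^ n)%N -> iter n saw (j%:R / (4 ^ n)%:R) = (odd j)%:R.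
Proof.
elim: n j => [|n IH] j.
  by rewrite expn0 divr1; case: j => [|[|]].
rewrite expnS iterSr => jn.
by have [j' [j'n <- ->]] := saw_dyadic (expn_gt0 4 n) jn; apply: IH.
Qed.

Lemma saw_net_hidden k x : mlp_hidden k.+1 saw_net x = saw_features (iter k saw (x 0 0)).
Proof.
elim: k => [|k IH].
  rewrite mlp_hidden1 /saw_features; congr relu_v; congr (_ + _).
  apply/matrixP => i j; rewrite !mxE big_ord_recr big_ord1 /= !mxE /= (ord1 j).
  by rewrite mul1r mul0r addr0; congr (x _ _); apply/val_inj.
rewrite mlp_hiddenS IH iterS /saw_features; congr relu_v; congr (_ + _).
by apply/matrixP => i j; rewrite /saw !mxE; apply: eq_bigr => l _; rewrite /= !mxE.
Qed.

Lemma saw_net_out d x : (0 < d)%N -> net_out d saw_net x = iter d saw (x 0 0) - 2^-1.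
Proof.
by move=> d0; rewrite /net_out -(prednK d0) saw_net_hidden iterS.
Qed.

Theorem theorem1 :
  exists f : nat -> 'cV[R]_2 -> int,
    (forall m x, f m x = 1 \/ f m x = -1) /\
    (forall d : nat, (1 <= d)%N ->
       exists b : R, 1 < b /\
         forall m : nat, (1 <= m)%N ->
         forall (w : nat) (N : mlp w),
           (forall x, mlp_eval d N x = f m x) -> b ^+ m <= w%:R) /\
    (forall m : nat, (1 <= m)%N ->
       exists N : mlp 4, forall x, mlp_eval (m + 2) N x = f m x).
Proof.
pose f m x := mlp_eval (m + 2) saw_net x.
exists f; split; first by move=> m x; rewrite /f /mlp_eval; case: ifP; [left | right].
split; last by move=> m _; exists saw_net.
move=> d d0; exists (width_base d); split; first exact: width_base_gt1.
move=> m _ w N Nf; set K := (4 ^ (m + 2))%N.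
have alt j : (j <= K)%N -> (0 < net_out d N (0 + j%:R *: const_mx K%:R^-1)) = odd j.
  move=> jK; rewrite -mlp_eval_eq1 Nf /f mlp_eval_eq1 saw_net_out ?addn_gt0 ?orbT //.
  rewrite !mxE add0r iter_saw_dyadic //.
  by case: odd; rewrite /= ?mulr1n ?mulr0n; [apply/idP | apply/negbTE; rewrite -leNgt]; lra.
have K2 : (2 <= K)%N by rewrite /K expnD; have := expn_gt0 4 m; lia.
have w2 := alternation_width_ge2 d0 (fun j j2 => alt j (leq_trans j2 K2)).
exact: width_lower_bound d0 w2 (alternation_length_bound d0 alt).
Qed.
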